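(* Consider the sub-$\ell^\infty$ structure on $\mathbb{R}^3$ defined by $X_1=\partial_x+y^2\partial_z$, $X_2=\partial_y$. If an extremal pair $(\lambda,\gamma)$ restricted to an open interval $I$ is an abnormal arc and $\gamma$ is not constant on $I$, then $\gamma(I)$ is contained in a line $\{y=0,\ z=z_0\}$ for some $z_0\in\mathbb{R}$. Conversely, every admissible trajectory contained in such a line admits an extremal lift whose restriction to its whole domain is an abnormal arc.
   Context: Sub-$\ell^\infty$ structure defined by smooth vector fields $X_1,\dots,X_k$ on a manifold $M$: an admissible trajectory is an absolutely continuous curve $\gamma:[0,T]\to M$ together with a measurable control $u=(u_1,\dots,u_k):[0,T]\to\mathbb{R}^k$ with $|u_i(t)|\le1$ for all $i$ and a.e. $t$, such that $\dot\gamma(t)=\sum_i u_i(t)X_i(\gamma(t))$ for a.e. $t$. An extremal pair is a pair $(\lambda,\gamma)$ where $\gamma$ is admissible with control $u$ and $\lambda:[0,T]\to T^*M$ is absolutely continuous with $\lambda(t)\in T^*_{\gamma(t)}M\setminus\{0\}$, such that, with $\mathcal H(\lambda,p,u)=\sum_i u_i\langle\lambda,X_i(p)\rangle$, in canonical coordinates $\dot\lambda=-\partial_p\mathcal H(\lambda,\gamma,u)$, $\dot\gamma=\partial_\lambda\mathcal H(\lambda,\gamma,u)$ a.e., and there is a constant $\lambda_0\ge0$ with $\sum_iu_i(t)\langle\lambda(t),X_i(\gamma(t))\rangle=\sum_i|\langle\lambda(t),X_i(\gamma(t))\rangle|=\lambda_0$ for a.e. $t$; $\gamma$ is then an extremal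 trajectory and $\lambda$ an extremal lift. The switching functions are $\varphi_j(t)=\langle\lambda(t),X_j(\gamma(t))\rangle$. The restriction of an extremal pair to an open interval $I$ is an abnormal arc if $\varphi_j\equiv0$ on $I$ for all $j=1,\dots,k$. *)

From Stdlib Require Import Reals Lra Lia.
Open Scope R_scope.

(* Points / covectors of R^n are represented as nat -> R (coordinates j < n). *)
Definition pt := nat -> R.

Fixpoint rsum (m : nat) (f : nat -> R) : R :=
  match m with O => 0 | S m' => rsum m' f + f m' end.

Definition pairing (n : nat) (l v : pt) : R := rsum n (fun j => l j * v j).

Definition upd (p : pt) (j : nat) (s : R) : pt :=
  fun i => if Nat.eqb i j then s else p i.

Definition negligible (N : R -> Prop) : Prop :=
  forall eps, 0 < eps -> exists c d : nat -> R,
    (forall i, c i <= d i) /\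
    (forall x, N x -> exists i, c i < x < d i) /\
    (forall m, rsum m (fun i => d i - c i) < eps).

Definition ae_on (a b : R) (P : R -> Prop) : Prop :=
  negligible (fun t => a <= t <= b /\ ~ P t).

Definition abs_cont (f : R -> R) (a b : R) : Prop :=
  forall eps, 0 < eps -> exists delta, 0 < delta /\
    forall (m : nat) (c d : nat -> R),
      (forall i, (i < m)%nat -> a <= c i /\ c i <= d i /\ d i <= b) ->
      (forall i j, (i < m)%nat -> (j < m)%nat -> i <> j ->
                   d i <= c j \/ d j <= c i) ->
      rsum m (fun i => d i - c i) < delta ->
      rsum m (fun i => Rabs (f (d i) - f (c i))) < eps.

(* Sub-l^infty structure on R^n given by k vector fields X 0, ..., X (k-1). *)

Definition admissible (n k : nat) (X : nat -> pt -> pt) (T : R)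
  (gamma : R -> pt) (u : R -> nat -> R) : Prop :=
  (forall j, (j < n)%nat -> abs_cont (fun t => gamma t j) 0 T) /\
  ae_on 0 T (fun t => forall i, (i < k)%nat -> Rabs (u t i) <= 1) /\
  ae_on 0 T (fun t => forall j, (j < n)%nat ->
     derivable_pt_lim (fun s => gamma s j) t
       (rsum k (fun i => u t i * X i (gamma t) j))).

Definition Ham (n k : nat) (X : nat -> pt -> pt) (l p : pt) (w : nat -> R) : R :=
  rsum k (fun i => w i * pairing n l (X i p)).

Definition extremal_pair (n k : nat) (X : nat -> pt -> pt) (T : R)
  (lam gamma : R -> pt) (u : R -> nat -> R) : Prop :=
  admissible n k X T gamma u /\
  (forall j, (j < n)%nat -> abs_cont (fun t => lam t j) 0 T) /\
  (forall t, 0 <= t <= T -> exists j, (j < n)%nat /\ lam t j <> 0) /\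
  (* lambda' = - d_p H,  gamma' = d_lambda H  (a.e.) *)
  ae_on 0 T (fun t => forall j, (j < n)%nat ->
     (exists dl, derivable_pt_lim (fun s => lam s j) t dl /\
        derivable_pt_lim (fun s => Ham n k X (lam t) (upd (gamma t) j s) (u t))
                         (gamma t j) (- dl)) /\
     (exists dg, derivable_pt_lim (fun s => gamma s j) t dg /\
        derivable_pt_lim (fun s => Ham n k X (upd (lam t) j s) (gamma t) (u t))
                         (lam t j) dg)) /\
  (* maximality condition with constant lambda_0 >= 0 *)
  (exists lam0, 0 <= lam0 /\
     ae_on 0 T (fun t =>
       Ham n k X (lam t) (gamma t) (u t) = lam0 /\
       rsum k (fun i => Rabs (pairing n (lam t) (X i (gamma t)))) = lam0)).

Definition switching (n : nat) (X : nat -> pt -> pt) (lam gamma : R -> pt)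
  (j : nat) (t : R) : R := pairing n (lam t) (X j (gamma t)).

Definition abnormal_arc (n k : nat) (X : nat -> pt -> pt) (lam gamma : R -> pt)
  (a b : R) : Prop :=
  forall t, a < t < b -> forall j, (j < k)%nat -> switching n X lam gamma j t = 0.

(* The structure on R^3 (coordinates x = 0, y = 1, z = 2):
   X_1 = d_x + y^2 d_z  (index 0),  X_2 = d_y (index 1). *)
Definition X1 (p : pt) : pt :=
  fun j => match j with 0%nat => 1 | 2%nat => (p 1%nat)^2 | _ => 0 end.
Definition X2 (p : pt) : pt :=
  fun j => match j with 1%nat => 1 | _ => 0 end.
Definition Xex (i : nat) : pt -> pt :=
  match i with 0%nat => X1 | _ => X2 end.

(* Along an abnormal arc both switching functions vanish: lam_y = 0 and
   lam_x + lam_z y^2 = 0, so lam_z <> 0.  The adjoint equations give lam_x and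
   lam_z constant and lam_y' = -2 u_1 lam_z y, whence u_1 y = 0 and y^2 is
   constant on the arc.  If y^2 > 0 then u_1 = 0 and, differentiating y^2,
   u_2 = 0, so the arc is constant; otherwise y = 0 and z' = u_1 y^2 = 0.
   Conversely, on a line {y = 0, z = z0} the constant covector dz is an
   extremal lift with vanishing switching functions.
   The analytic input is that an absolutely continuous function whose
   derivative vanishes almost everywhere is constant, proved by a creeping
   argument: the supremum of the points up to which the oscillation of the
   function is controlled cannot lie before the right endpoint. *)

From Stdlib Require Import Reals Lra Lia Classical.
Open Scope R_scope.

Lemma rsum_ext m f g : (forall i, (i < m)%nat -> f i = g i) -> rsum m f = rsum m g.
Proof.
  induction m as [|m IH]; simpl; intros H; [reflexivity|].
  rewrite IH by (intros; apply H; lia). rewrite H by lia. reflexivity.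
Qed.

Lemma rsum_le m f g : (forall i, (i < m)%nat -> f i <= g i) -> rsum m f <= rsum m g.
Proof.
  induction m as [|m IH]; simpl; intros H; [lra|].
  assert (IHm := IH (fun i Hi => H i ltac:(lia))). assert (Hm := H m ltac:(lia)). lra.
Qed.

Lemma rsum_zero m : rsum m (fun _ => 0) = 0.
Proof. induction m as [|m IH]; simpl; [reflexivity|]. rewrite IH. ring. Qed.

Lemma rsum_affine m f g a :
  rsum m (fun i => f i + a * g i) = rsum m f + a * rsum m g.
Proof. induction m as [|m IH]; simpl; [ring|]. rewrite IH. ring. Qed.

Lemma rsum_le_widen m m' f : (forall i, 0 <= f i) -> (m <= m')%nat -> rsum m f <= rsum m' f.
Proof.
  intros Hf Hm. induction Hm as [|m' _ IH]; simpl; [lra|]. specialize (Hf m'). lra.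
Qed.

Lemma rsum_widen m m' g : (m <= m')%nat -> (forall j, (m <= j)%nat -> g j = 0) ->
  rsum m' g = rsum m g.
Proof. intros Hm Hg. induction Hm as [|m' Hm IH]; simpl; [reflexivity|]. rewrite IH, Hg by lia. ring. Qed.

Lemma rsum_change_one m i g g' : (i < m)%nat -> (forall j, j <> i -> g' j = g j) ->
  rsum m g' = rsum m g + (g' i - g i).
Proof.
  intros Hi H. induction m as [|m IH]; [lia|]. simpl.
  destruct (Nat.eq_dec m i) as [->|Hne].
  - rewrite (rsum_ext i g' g) by (intros; apply H; lia). ring.
  - rewrite IH by lia. rewrite (H m Hne). ring.
Qed.

Definition interleave (f g : nat -> R) (k : nat) : R :=
  if Nat.even k then f (Nat.div2 k) else g (Nat.div2 k).

Lemma interleave_even f g n : interleave f g (2 * n) = f n.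
Proof. unfold interleave. rewrite Nat.even_even, Nat.div2_double. reflexivity. Qed.

Lemma interleave_odd f g n : interleave f g (S (2 * n)) = g n.
Proof.
  unfold interleave. rewrite Nat.even_succ, <- Nat.negb_even, Nat.even_even, Nat.div2_succ_double.
  reflexivity.
Qed.

Lemma rsum_interleave m f g : rsum (2 * m) (interleave f g) = rsum m f + rsum m g.
Proof.
  induction m as [|m IH]; simpl; [ring|].
  replace (m + S (m + 0))%nat with (S (2 * m)) by lia. simpl rsum.
  rewrite interleave_odd. replace (m + (m + 0))%nat with (2 * m)%nat by lia.
  rewrite interleave_even, IH. ring.
Qed.

Lemma negligible_union (N1 N2 : R -> Prop) :
  negligible N1 -> negligible N2 -> negligible (fun x => N1 x \/ N2 x).
Proof.
  intros H1 H2 eps He.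
  destruct (H1 (eps / 2) ltac:(lra)) as [c1 [d1 [Hcd1 [Hcov1 Hsum1]]]].
  destruct (H2 (eps / 2) ltac:(lra)) as [c2 [d2 [Hcd2 [Hcov2 Hsum2]]]].
  exists (interleave c1 c2), (interleave d1 d2). split; [|split].
  - intros i. unfold interleave. destruct (Nat.even i); auto.
  - intros x [Hx|Hx].
    + destruct (Hcov1 x Hx) as [i Hi]. exists (2 * i)%nat. rewrite !interleave_even. exact Hi.
    + destruct (Hcov2 x Hx) as [i Hi]. exists (S (2 * i)). rewrite !interleave_odd. exact Hi.
  - intros m.
    assert (Hlen : forall i, interleave d1 d2 i - interleave c1 c2 i
                             = interleave (fun i => d1 i - c1 i) (fun i => d2 i - c2 i) i)
      by (intros i; unfold interleave; destruct (Nat.even i); reflexivity).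
    apply Rle_lt_trans with (rsum (2 * m) (fun i => interleave d1 d2 i - interleave c1 c2 i)).
    + apply rsum_le_widen; [|lia]. intros i. rewrite Hlen. unfold interleave.
      destruct (Nat.even i); [specialize (Hcd1 (Nat.div2 i))|specialize (Hcd2 (Nat.div2 i))]; lra.
    + rewrite (rsum_ext _ _ _ (fun i _ => Hlen i)), rsum_interleave.
      specialize (Hsum1 m). specialize (Hsum2 m). lra.
Qed.

Lemma negligible_subset (N1 N2 : R -> Prop) :
  (forall x, N2 x -> N1 x) -> negligible N1 -> negligible N2.
Proof.
  intros Hsub H eps He. destruct (H eps He) as [c [d [Hcd [Hcov Hsum]]]].
  exists c, d. auto.
Qed.

Lemma ae_on_impl a b (P Q : R -> Prop) :
  (forall t, a <= t <= b -> P t -> Q t) -> ae_on a b P -> ae_on a b Q.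
Proof. intros H. apply negligible_subset. intros x [Hx HQ]. split; auto. Qed.

Lemma ae_on_and a b (P Q : R -> Prop) :
  ae_on a b P -> ae_on a b Q -> ae_on a b (fun t => P t /\ Q t).
Proof.
  intros HP HQ. refine (negligible_subset _ _ _ (negligible_union _ _ HP HQ)).
  intros x [Hx HPQ]. destruct (classic (P x)); [right|left]; tauto.
Qed.

Lemma ae_on_subinterval a b a' b' (P : R -> Prop) :
  a <= a' -> b' <= b -> ae_on a b P -> ae_on a' b' P.
Proof. intros Ha Hb. apply negligible_subset. intros x [Hx HP]. split; [lra|exact HP]. Qed.

Lemma ae_on_everywhere a b (P : R -> Prop) : (forall t, a <= t <= b -> P t) -> ae_on a b P.
Proof.
  intros H eps He. exists (fun _ => 0), (fun _ => 0). split; [intros; lra|split].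
  - intros x [Hx HP]. exfalso. exact (HP (H x Hx)).
  - intros m. rewrite (rsum_ext m _ (fun _ => 0)) by (intros; ring). rewrite rsum_zero. exact He.
Qed.

Lemma abs_cont_const a b K : abs_cont (fun _ => K) a b.
Proof.
  intros eps He. exists 1. split; [lra|]. intros m c d _ _ _.
  rewrite (rsum_ext m _ (fun _ => 0)) by (intros; rewrite Rminus_diag, Rabs_R0; reflexivity).
  rewrite rsum_zero. exact He.
Qed.

Lemma abs_cont_subinterval f a b a' b' : a <= a' -> b' <= b -> abs_cont f a b -> abs_cont f a' b'.
Proof.
  intros Ha Hb H eps He. destruct (H eps He) as [delta [Hdelta Hf]]. exists delta.
  split; [exact Hdelta|]. intros m c d Hin. apply Hf. intros i Hi. specialize (Hin i Hi). lra.
Qed.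

Lemma derivable_pt_lim_quadratic (f : R -> R) A B C x l :
  (forall s, f s = A + B * s + C * (s * s)) -> l = B + 2 * C * x -> derivable_pt_lim f x l.
Proof.
  intros Hf ->. apply (derivable_pt_lim_ext (fun s => A + B * s + C * (s * s))); [intros; auto|].
  replace (B + 2 * C * x) with (0 + B * 1 + C * (1 * x + x * 1)) by ring.
  apply (derivable_pt_lim_plus (fun s => A + B * s) (fun s => C * (s * s))).
  - apply (derivable_pt_lim_plus (fun _ => A) (fun s => B * s)).
    + apply derivable_pt_lim_const.
    + apply (derivable_pt_lim_scal id), derivable_pt_lim_id.
  - apply (derivable_pt_lim_scal (fun s => s * s)).
    apply (derivable_pt_lim_mult id id); apply derivable_pt_lim_id.
Qed.

Lemma derivable_pt_lim_locally_const (g : R -> R) a b K t :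
  (forall s, a < s < b -> g s = K) -> a < t < b -> derivable_pt_lim g t 0.
Proof.
  intros Hg Ht. apply (derivable_pt_lim_locally_ext (fun _ => K) g t a b 0 Ht).
  - intros s Hs. symmetry. apply Hg, Hs.
  - apply derivable_pt_lim_const.
Qed.

Lemma derivable_pt_lim_0_bound f s eps : derivable_pt_lim f s 0 -> 0 < eps ->
  exists delta, 0 < delta /\
    forall y, Rabs (y - s) < delta -> Rabs (f y - f s) <= eps * Rabs (y - s).
Proof.
  intros H He. destruct (H eps He) as [delta Hdelta]. exists delta. split; [apply cond_pos|].
  intros y Hy. destruct (Req_dec (y - s) 0) as [H0|H0].
  - replace y with s by lra. rewrite !Rminus_diag, Rabs_R0. lra.
  - specialize (Hdelta (y - s) H0 Hy). replace (s + (y - s)) with y in Hdelta by ring.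
    rewrite Rminus_0_r in Hdelta. unfold Rdiv in Hdelta. rewrite Rabs_mult, Rabs_inv in Hdelta.
    assert (Hpos : 0 < Rabs (y - s)) by (apply Rabs_pos_lt; exact H0).
    apply Rmult_lt_compat_r with (r := Rabs (y - s)) in Hdelta; [|exact Hpos].
    rewrite Rmult_assoc, Rinv_l in Hdelta by lra. lra.
Qed.

Lemma Rabs_le_eps_mul_eq0 z K : 0 < K -> (forall eps, 0 < eps -> Rabs z <= eps * K) -> z = 0.
Proof.
  intros HK H. destruct (Req_dec z 0) as [|Hz]; [assumption|exfalso].
  assert (Hpos : 0 < Rabs z) by (apply Rabs_pos_lt; exact Hz).
  specialize (H (Rabs z / (2 * K)) ltac:(apply Rdiv_lt_0_compat; lra)).
  replace (Rabs z / (2 * K) * K) with (Rabs z / 2) in H by (field; lra). lra.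
Qed.

(** * Absolutely continuous functions with a.e. vanishing derivative *)

(* Fix eps > 0 and a cover of the exceptional set by intervals (cc i, dd i).
   A chain up to x is a family of disjoint subintervals [p i, q i] of [c, x],
   each unused (collapsed at c) or attached to the cover interval of the same
   index, which controls the oscillation of f on [c, x] up to eps (x - c).
   By absolute continuity its total oscillation is small. *)
Section Creeping.

Variables (f : R -> R) (c d eps : R) (cc dd : nat -> R).

Record chain (x : R) (M : nat) (p q : nat -> R) : Prop := {
  chain_unused : forall i, (M <= i)%nat -> p i = c /\ q i = c;
  chain_range : forall i, c <= p i <= q i /\ q i <= x;
  chain_disjoint : forall i j, i <> j -> q i <= p j \/ q j <= p i;
  chain_cover : forall i, (p i = c /\ q i = c) \/ (cc i < p i /\ q i = Rmin (dd i) d);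
  chain_bound :
    Rabs (f x - f c) <= eps * (x - c) + rsum M (fun i => Rabs (f (q i) - f (p i)))
}.

Definition reachable (x : R) : Prop := c <= x <= d /\ exists M p q, chain x M p q.

Lemma chain_start : chain c 0 (fun _ => c) (fun _ => c).
Proof.
  split; simpl; auto; intros; try lra.
  rewrite Rminus_diag, Rabs_R0. lra.
Qed.

Lemma chain_le x M p q : chain x M p q -> c <= x.
Proof. intros Hch. destruct (chain_range _ _ _ _ Hch 0%nat). lra. Qed.

Lemma chain_extend_regular x y M p q :
  chain x M p q -> x <= y -> Rabs (f y - f x) <= eps * (y - x) -> chain y M p q.
Proof.
  intros Hch Hxy Hfy. destruct Hch as [Hunused Hrange Hdisj Hcover Hbound]. split; auto.
  - intros i. specialize (Hrange i). lra.
  - assert (Rabs (f y - f c) <= Rabs (f x - f c) + Rabs (f y - f x)).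
    { replace (f y - f c) with ((f x - f c) + (f y - f x)) by ring. apply Rabs_triang. }
    lra.
Qed.

Lemma chain_extend_cover x e i M p q : 0 <= eps ->
  chain x M p q -> p i = c -> q i = c -> cc i < x <= e -> e = Rmin (dd i) d ->
  chain e (Nat.max M (S i)) (upd p i x) (upd q i e).
Proof.
  intros Heps Hch Hpi Hqi Hxe He. assert (Hcx := chain_le _ _ _ _ Hch).
  destruct Hch as [Hunused Hrange Hdisj Hcover Hbound].
  unfold upd. split.
  - intros j Hj. destruct (Nat.eqb_spec j i); [lia|]. apply Hunused. lia.
  - intros j. destruct (Nat.eqb_spec j i); [lra|]. specialize (Hrange j). lra.
  - intros j k Hjk. destruct (Nat.eqb_spec j i), (Nat.eqb_spec k i); try lia.
    + right. specialize (Hrange k). lra.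
    + left. specialize (Hrange j). lra.
    + apply Hdisj, Hjk.
  - intros j. destruct (Nat.eqb_spec j i) as [->|]; [right; split; [lra|exact He]|apply Hcover].
  - rewrite (rsum_change_one _ i (fun j => Rabs (f (q j) - f (p j)))); [|lia|].
    2:{ intros j Hj. destruct (Nat.eqb_spec j i); [lia|reflexivity]. }
    rewrite (rsum_widen M); [|lia|].
    2:{ intros j Hj. destruct (Hunused j Hj) as [-> ->]. rewrite Rminus_diag, Rabs_R0. reflexivity. }
    rewrite Nat.eqb_refl, Hpi, Hqi, Rminus_diag, Rabs_R0.
    assert (Rabs (f e - f c) <= Rabs (f x - f c) + Rabs (f e - f x)).
    { replace (f e - f c) with ((f x - f c) + (f e - f x)) by ring. apply Rabs_triang. }
    assert (eps * (x - c) <= eps * (e - c)) by (apply Rmult_le_compat_l; lra).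
    lra.
Qed.

Lemma chain_used_cover_end x i M p q :
  chain x M p q -> x <= d -> x < dd i -> q i = Rmin (dd i) d -> x = d.
Proof.
  intros Hch Hxd Hxdd Hqi. destruct (chain_range _ _ _ _ Hch i) as [_ Hqx].
  revert Hqi. unfold Rmin. destruct (Rle_dec (dd i) d); lra.
Qed.

Lemma chain_length x M p q : (forall i, cc i <= dd i) ->
  chain x M p q -> rsum M (fun i => q i - p i) <= rsum M (fun i => dd i - cc i).
Proof.
  intros Hcd Hch. apply rsum_le. intros i _. specialize (Hcd i).
  destruct (chain_cover _ _ _ _ Hch i) as [[-> ->]|[Hpi ->]]; [lra|].
  assert (Rmin (dd i) d <= dd i) by apply Rmin_l. lra.
Qed.

Variable N : R -> Prop.
Hypotheses (Hcd : c <= d) (Heps : 0 < eps)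
  (Hcover : forall x, N x -> exists i, cc i < x < dd i)
  (Hderiv : forall x, c <= x <= d -> ~ N x -> derivable_pt_lim f x 0).

Lemma reachable_near_sup s r : is_lub reachable s -> r < s -> exists x, reachable x /\ r < x <= s.
Proof.
  intros [Hub Hlub] Hr. apply NNPP. intros Hno. assert (s <= r); [|lra].
  apply Hlub. intros x Hx. destruct (Rle_dec x r) as [|Hxr]; [assumption|].
  exfalso. apply Hno. exists x. split; [exact Hx|]. split; [lra|apply Hub, Hx].
Qed.

Lemma reachable_past_null s : is_lub reachable s -> N s ->
  exists y, reachable y /\ (y = d \/ s < y).
Proof.
  intros Hs Ns. destruct (Hcover s Ns) as [i Hi].
  destruct (reachable_near_sup s (cc i) Hs ltac:(lra)) as [x [[Hx [M [p [q Hch]]]] Hxi]].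
  destruct (chain_cover _ _ _ _ Hch i) as [[Hpi Hqi]|[_ Hqi]].
  - set (e := Rmin (dd i) d).
    assert (Hxe : x <= e) by (apply Rmin_glb; lra).
    exists e. split.
    + split; [split; [lra|apply Rmin_r]|].
      exists (Nat.max M (S i)), (upd p i x), (upd q i e).
      apply (chain_extend_cover x); auto; lra.
    + unfold e, Rmin. destruct (Rle_dec (dd i) d); [right; lra|left; reflexivity].
  - exists x. split; [split; [exact Hx|exists M, p, q; exact Hch]|].
    left. apply (chain_used_cover_end x i M p q); auto; lra.
Qed.

Lemma reachable_past_regular s : is_lub reachable s -> c <= s <= d -> ~ N s ->
  exists y, reachable y /\ (y = d \/ s < y).
Proof.
  intros Hs Hsd Ns.
  destruct (derivable_pt_lim_0_bound f s eps (Hderiv s Hsd Ns) Heps) as [delta [Hdelta Hf]].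
  destruct (reachable_near_sup s (s - delta / 2) Hs ltac:(lra)) as [x [[Hx [M [p [q Hch]]]] Hxs]].
  set (y := Rmin (s + delta / 2) d).
  assert (Hsy : s <= y) by (apply Rmin_glb; lra).
  assert (Hyd : y <= s + delta / 2) by apply Rmin_l.
  exists y. split.
  - split; [split; [lra|apply Rmin_r]|]. exists M, p, q.
    apply (chain_extend_regular x); [exact Hch|lra|].
    assert (Hy := Hf y ltac:(rewrite Rabs_right; lra)).
    assert (Hx' := Hf x ltac:(rewrite Rabs_left1; lra)).
    rewrite (Rabs_right (y - s)) in Hy by lra. rewrite (Rabs_left1 (x - s)) in Hx' by lra.
    assert (Rabs (f y - f x) <= Rabs (f y - f s) + Rabs (f x - f s)).
    { replace (f y - f x) with ((f y - f s) + - (f x - f s)) by ring.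
      rewrite <- (Rabs_Ropp (f x - f s)). apply Rabs_triang. }
    lra.
  - unfold y, Rmin. destruct (Rle_dec (s + delta / 2) d); [right; lra|left; reflexivity].
Qed.

Lemma reachable_end : reachable d.
Proof.
  assert (Hc : reachable c) by (split; [lra|exists 0%nat, (fun _ => c), (fun _ => c); apply chain_start]).
  destruct (completeness reachable) as [s Hs].
  - exists d. intros x [Hx _]. lra.
  - exists c. exact Hc.
  - assert (Hcs : c <= s) by (apply (proj1 Hs), Hc).
    assert (Hsd : s <= d) by (apply (proj2 Hs); intros x [Hx _]; lra).
    destruct (classic (N s)) as [Ns|Ns].
    + destruct (reachable_past_null s Hs Ns) as [y [Hy [->|Hsy]]]; [exact Hy|].
      assert (y <= s) by (apply (proj1 Hs), Hy). lra.
    + destruct (reachable_past_regular s Hs ltac:(lra) Ns) as [y [Hy [->|Hsy]]]; [exact Hy|].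
      assert (y <= s) by (apply (proj1 Hs), Hy). lra.
Qed.

End Creeping.

Lemma abs_cont_ae_deriv0_const f c d : c <= d -> abs_cont f c d ->
  ae_on c d (fun x => derivable_pt_lim f x 0) -> f d = f c.
Proof.
  intros Hcd Hac Hae. apply Rminus_diag_uniq, (Rabs_le_eps_mul_eq0 _ (d - c + 1)); [lra|].
  intros eps Heps. destruct (Hac eps Heps) as [delta [Hdelta Hosc]].
  destruct (Hae delta Hdelta) as [cc [dd [Hccdd [Hcover Hsum]]]].
  destruct (reachable_end f c d eps cc dd _ Hcd Heps Hcover) as [_ [M [p [q Hch]]]].
  { intros x Hx HN. apply NNPP. intros Hno. apply HN. split; assumption. }
  assert (Hosc_chain : rsum M (fun i => Rabs (f (q i) - f (p i))) < eps).
  { apply Hosc.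
    - intros i _. destruct (chain_range _ _ _ _ _ _ _ _ _ _ Hch i). lra.
    - intros i j _ _ Hij. apply (chain_disjoint _ _ _ _ _ _ _ _ _ _ Hch), Hij.
    - eapply Rle_lt_trans; [apply (chain_length _ _ _ _ _ _ _ _ _ _ Hccdd Hch)|apply Hsum]. }
  assert (Hb := chain_bound _ _ _ _ _ _ _ _ _ _ Hch). lra.
Qed.

Lemma ae_deriv0_constant_on g T a b (P : R -> Prop) :
  abs_cont g 0 T -> ae_on 0 T P -> 0 <= a -> b <= T ->
  (forall t, a < t < b -> P t -> derivable_pt_lim g t 0) ->
  forall s t, a < s < b -> a < t < b -> g s = g t.
Proof.
  intros Hac HP Ha Hb Hderiv.
  assert (Hconst : forall s t, a < s < b -> a < t < b -> s <= t -> g t = g s).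
  { intros s t Hs Ht Hst. apply abs_cont_ae_deriv0_const; [exact Hst| |].
    - apply (abs_cont_subinterval g 0 T); [lra|lra|exact Hac].
    - apply (ae_on_impl s t P); [|apply (ae_on_subinterval 0 T); [lra|lra|exact HP]].
      intros x Hx. apply Hderiv. lra. }
  intros s t Hs Ht. destruct (Rle_dec s t); [symmetry|]; apply Hconst; auto; lra.
Qed.

(** * Hamiltonian calculus *)

Definition follows_dynamics (n k : nat) (X : nat -> pt -> pt) (gamma : R -> pt)
  (u : R -> nat -> R) (t : R) : Prop :=
  forall j, (j < n)%nat ->
    derivable_pt_lim (fun s => gamma s j) t (rsum k (fun i => u t i * X i (gamma t) j)).

Definition hamiltonian_at (n k : nat) (X : nat -> pt -> pt) (lam gamma : R -> pt)
  (u : R -> nat -> R) (t : R) : Prop :=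
  forall j, (j < n)%nat ->
    (exists dl, derivable_pt_lim (fun s => lam s j) t dl /\
       derivable_pt_lim (fun s => Ham n k X (lam t) (upd (gamma t) j s) (u t))
                        (gamma t j) (- dl)) /\
    (exists dg, derivable_pt_lim (fun s => gamma s j) t dg /\
       derivable_pt_lim (fun s => Ham n k X (upd (lam t) j s) (gamma t) (u t))
                        (lam t j) dg).

Lemma pairing_upd n l v j s : (j < n)%nat ->
  pairing n (upd l j s) v = pairing n l v + (s - l j) * v j.
Proof.
  intros Hj. unfold pairing. rewrite (rsum_change_one n j (fun i => l i * v i)); [|exact Hj|].
  - unfold upd. rewrite Nat.eqb_refl. ring.
  - intros i Hi. unfold upd. destruct (Nat.eqb_spec i j); [contradiction|reflexivity].
Qed.

Lemma Ham_derivable_costate n k X l p w j : (j < n)%nat ->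
  derivable_pt_lim (fun s => Ham n k X (upd l j s) p w) (l j) (rsum k (fun i => w i * X i p j)).
Proof.
  intros Hj. apply (derivable_pt_lim_quadratic _
    (Ham n k X l p w - l j * rsum k (fun i => w i * X i p j)) (rsum k (fun i => w i * X i p j)) 0).
  - intros s. unfold Ham.
    rewrite (rsum_ext k _ (fun i => w i * pairing n l (X i p) + (s - l j) * (w i * X i p j)))
      by (intros i _; rewrite pairing_upd by exact Hj; ring).
    rewrite rsum_affine. ring.
  - ring.
Qed.

Lemma Ham_Xex l p w :
  Ham 3 2 Xex l p w = w 0%nat * (l 0%nat + l 2%nat * (p 1%nat * p 1%nat)) + w 1%nat * l 1%nat.
Proof. unfold Ham, pairing, Xex, X1, X2. simpl. ring. Qed.

Lemma Ham_Xex_derivable_state l p w j : (j < 3)%nat ->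
  derivable_pt_lim (fun s => Ham 3 2 Xex l (upd p j s) w) (p j)
    (if Nat.eqb j 1 then 2 * w 0%nat * l 2%nat * p 1%nat else 0).
Proof.
  intros Hj. destruct j as [|[|[|j]]]; [| | |lia]; simpl.
  - apply (derivable_pt_lim_quadratic _ (Ham 3 2 Xex l p w) 0 0); [|ring].
    intros s. rewrite !Ham_Xex. unfold upd. simpl. ring.
  - apply (derivable_pt_lim_quadratic _ (w 0%nat * l 0%nat + w 1%nat * l 1%nat) 0
      (w 0%nat * l 2%nat)); [|ring].
    intros s. rewrite Ham_Xex. unfold upd. simpl. ring.
  - apply (derivable_pt_lim_quadratic _ (Ham 3 2 Xex l p w) 0 0); [|ring].
    intros s. rewrite !Ham_Xex. unfold upd. simpl. ring.
Qed.

Lemma switching_Xex_0 lam gamma t :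
  switching 3 Xex lam gamma 0 t = lam t 0%nat + lam t 2%nat * (gamma t 1%nat * gamma t 1%nat).
Proof. unfold switching, pairing, Xex, X1. simpl. ring. Qed.

Lemma switching_Xex_1 lam gamma t : switching 3 Xex lam gamma 1 t = lam t 1%nat.
Proof. unfold switching, pairing, Xex, X2. simpl. ring. Qed.

Lemma hamiltonian_at_Xex_costate lam gamma u t j :
  hamiltonian_at 3 2 Xex lam gamma u t -> (j < 3)%nat ->
  derivable_pt_lim (fun s => lam s j) t
    (- (if Nat.eqb j 1 then 2 * u t 0%nat * lam t 2%nat * gamma t 1%nat else 0)).
Proof.
  intros H Hj. destruct (H j Hj) as [[dl [Hdl HdH]] _].
  assert (E := uniqueness_limite _ _ _ _ HdH (Ham_Xex_derivable_state (lam t) (gamma t) (u t) j Hj)).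
  rewrite <- E, Ropp_involutive. exact Hdl.
Qed.

Lemma follows_dynamics_Xex gamma u t : follows_dynamics 3 2 Xex gamma u t ->
  derivable_pt_lim (fun s => gamma s 0%nat) t (u t 0%nat) /\
  derivable_pt_lim (fun s => gamma s 1%nat) t (u t 1%nat) /\
  derivable_pt_lim (fun s => gamma s 2%nat) t (u t 0%nat * (gamma t 1%nat * gamma t 1%nat)).
Proof.
  intros H. split; [|split].
  - replace (u t 0%nat) with (rsum 2 (fun i => u t i * Xex i (gamma t) 0%nat)) by (simpl; ring).
    apply H. lia.
  - replace (u t 1%nat) with (rsum 2 (fun i => u t i * Xex i (gamma t) 1%nat)) by (simpl; ring).
    apply H. lia.
  - replace (u t 0%nat * (gamma t 1%nat * gamma t 1%nat))
      with (rsum 2 (fun i => u t i * Xex i (gamma t) 2%nat)) by (simpl; ring).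
    apply H. lia.
Qed.

(** * Abnormal arcs of the structure X_1 = d_x + y^2 d_z, X_2 = d_y *)

Section AbnormalArc.

Variables (T a b : R) (lam gamma : R -> pt) (u : R -> nat -> R).
Hypotheses (Hext : extremal_pair 3 2 Xex T lam gamma u) (Ha : 0 <= a) (Hb : b <= T)
  (Habn : abnormal_arc 3 2 Xex lam gamma a b).

Definition regular_time (t : R) : Prop :=
  follows_dynamics 3 2 Xex gamma u t /\ hamiltonian_at 3 2 Xex lam gamma u t.

Lemma regular_time_ae : ae_on 0 T regular_time.
Proof. destruct Hext as [[_ [_ Hdyn]] [_ [_ [Hham _]]]]. exact (ae_on_and _ _ _ _ Hdyn Hham). Qed.

Lemma abnormal_lam1 t : a < t < b -> lam t 1%nat = 0.
Proof. intros Ht. rewrite <- (switching_Xex_1 lam gamma t). apply Habn; [exact Ht|lia]. Qed.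

Lemma abnormal_lam0 t : a < t < b ->
  lam t 0%nat + lam t 2%nat * (gamma t 1%nat * gamma t 1%nat) = 0.
Proof. intros Ht. rewrite <- switching_Xex_0. apply Habn; [exact Ht|lia]. Qed.

Lemma abnormal_lam2_neq0 t : a < t < b -> lam t 2%nat <> 0.
Proof.
  intros Ht Hz. destruct Hext as [_ [_ [Hnz _]]].
  destruct (Hnz t ltac:(lra)) as [j [Hj Hlj]].
  assert (H1 := abnormal_lam1 t Ht). assert (H0 := abnormal_lam0 t Ht). rewrite Hz in H0.
  destruct j as [|[|[|j]]]; [| | |lia]; apply Hlj; lra.
Qed.

Lemma abnormal_lam_const j : (j < 3)%nat -> j <> 1%nat ->
  forall s t, a < s < b -> a < t < b -> lam s j = lam t j.
Proof.
  intros Hj Hj1. destruct Hext as [_ [Hac _]].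
  apply (ae_deriv0_constant_on (fun s => lam s j) T a b regular_time (Hac j Hj) regular_time_ae Ha Hb).
  intros t Ht [_ Hham]. assert (D := hamiltonian_at_Xex_costate _ _ _ _ _ Hham Hj).
  rewrite (proj2 (Nat.eqb_neq j 1) Hj1), Ropp_0 in D. exact D.
Qed.

Lemma abnormal_u0_y t : a < t < b -> regular_time t -> u t 0%nat * gamma t 1%nat = 0.
Proof.
  intros Ht [_ Hham].
  assert (D := hamiltonian_at_Xex_costate _ _ _ _ 1 Hham ltac:(lia)). simpl in D.
  assert (D0 := derivable_pt_lim_locally_const (fun s => lam s 1%nat) a b 0 t abnormal_lam1 Ht).
  assert (E := uniqueness_limite _ _ _ _ D D0).
  assert (Hp : lam t 2%nat * (u t 0%nat * gamma t 1%nat) = 0) by lra.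
  destruct (Rmult_integral _ _ Hp) as [Hz|]; [exfalso; exact (abnormal_lam2_neq0 t Ht Hz)|assumption].
Qed.

Lemma abnormal_y_sq_const s t : a < s < b -> a < t < b ->
  gamma s 1%nat * gamma s 1%nat = gamma t 1%nat * gamma t 1%nat.
Proof.
  intros Hs Ht. assert (Es := abnormal_lam0 s Hs). assert (Et := abnormal_lam0 t Ht).
  rewrite (abnormal_lam_const 0 ltac:(lia) ltac:(lia) s t Hs Ht),
          (abnormal_lam_const 2 ltac:(lia) ltac:(lia) s t Hs Ht) in Es.
  apply (Rmult_eq_reg_l (lam t 2%nat)); [lra|exact (abnormal_lam2_neq0 t Ht)].
Qed.

Lemma abnormal_arc_on_line t0 : a < t0 < b -> gamma t0 1%nat = 0 ->
  exists z0, forall t, a < t < b -> gamma t 1%nat = 0 /\ gamma t 2%nat = z0.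
Proof.
  intros Ht0 Hy0. destruct Hext as [[Hac _] _].
  assert (Hy : forall t, a < t < b -> gamma t 1%nat = 0).
  { intros t Ht. assert (H := abnormal_y_sq_const t t0 Ht Ht0). rewrite Hy0 in H. nra. }
  exists (gamma t0 2%nat). intros t Ht. split; [exact (Hy t Ht)|].
  apply (ae_deriv0_constant_on (fun s => gamma s 2%nat) T a b regular_time
           (Hac 2%nat ltac:(lia)) regular_time_ae Ha Hb); [|exact Ht|exact Ht0].
  intros s Hs [Hdyn _]. destruct (follows_dynamics_Xex _ _ _ Hdyn) as [_ [_ Dz]].
  rewrite (Hy s Hs), !Rmult_0_r in Dz. exact Dz.
Qed.

Lemma abnormal_arc_off_line_const t0 : a < t0 < b -> gamma t0 1%nat <> 0 ->
  forall j, (j < 3)%nat -> forall s t, a < s < b -> a < t < b -> gamma s j = gamma t j.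
Proof.
  intros Ht0 Hy0 j Hj. destruct Hext as [[Hac _] _].
  apply (ae_deriv0_constant_on (fun s => gamma s j) T a b regular_time
           (Hac j Hj) regular_time_ae Ha Hb).
  intros t Ht Hreg.
  assert (Hy : gamma t 1%nat <> 0).
  { intros Hz. assert (H := abnormal_y_sq_const t t0 Ht Ht0). rewrite Hz in H.
    assert (0 < gamma t0 1%nat * gamma t0 1%nat) by (apply Rsqr_pos_lt; exact Hy0). lra. }
  assert (Hu0 : u t 0%nat = 0).
  { destruct (Rmult_integral _ _ (abnormal_u0_y t Ht Hreg)); [assumption|contradiction]. }
  destruct (follows_dynamics_Xex _ _ _ (proj1 Hreg)) as [Dx [Dy Dz]].
  assert (Hu1 : u t 1%nat = 0).
  { assert (Dsq := derivable_pt_lim_mult _ _ _ _ _ Dy Dy).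
    assert (Dsq0 := derivable_pt_lim_locally_const (fun s => gamma s 1%nat * gamma s 1%nat) a b
                      (gamma t0 1%nat * gamma t0 1%nat) t (fun s Hs => abnormal_y_sq_const s t0 Hs Ht0) Ht).
    assert (E := uniqueness_limite _ _ _ _ Dsq Dsq0).
    assert (Hp : gamma t 1%nat * (2 * u t 1%nat) = 0) by (simpl in E; lra).
    destruct (Rmult_integral _ _ Hp); [contradiction|lra]. }
  rewrite Hu0 in Dx, Dz. rewrite Hu1 in Dy. rewrite Rmult_0_l in Dz.
  destruct j as [|[|[|j]]]; [exact Dx|exact Dy|exact Dz|lia].
Qed.

End AbnormalArc.

Definition covector_dz : pt := fun j => match j with 2%nat => 1 | _ => 0 end.

Lemma switching_dz_on_line gamma t j : gamma t 1%nat = 0 -> (j < 2)%nat ->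
  switching 3 Xex (fun _ => covector_dz) gamma j t = 0.
Proof.
  intros Hy Hj. destruct j as [|[|j]]; [| |lia].
  - rewrite switching_Xex_0, Hy. unfold covector_dz. ring.
  - rewrite switching_Xex_1. reflexivity.
Qed.

Lemma covector_dz_abnormal T gamma z0 :
  (forall t, 0 <= t <= T -> gamma t 1%nat = 0 /\ gamma t 2%nat = z0) ->
  abnormal_arc 3 2 Xex (fun _ => covector_dz) gamma 0 T.
Proof. intros Hline t Ht j. apply switching_dz_on_line, (proj1 (Hline t ltac:(lra))). Qed.

Lemma covector_dz_extremal T gamma u z0 : admissible 3 2 Xex T gamma u ->
  (forall t, 0 <= t <= T -> gamma t 1%nat = 0 /\ gamma t 2%nat = z0) ->
  extremal_pair 3 2 Xex T (fun _ => covector_dz) gamma u.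
Proof.
  intros Hadm Hline. split; [exact Hadm|]. destruct Hadm as [_ [_ Hdyn]].
  split; [|split; [|split]].
  - intros j _. apply abs_cont_const.
  - intros t _. exists 2%nat. split; [lia|]. simpl. lra.
  - refine (ae_on_impl _ _ _ _ _ Hdyn). intros t Ht Hdt j Hj. split.
    + exists 0. split; [apply derivable_pt_lim_const|].
      replace (- 0) with (if Nat.eqb j 1 then 2 * u t 0%nat * covector_dz 2%nat * gamma t 1%nat else 0)
        by (destruct (Nat.eqb j 1); [rewrite (proj1 (Hline t Ht))|]; ring).
      apply Ham_Xex_derivable_state, Hj.
    + exists (rsum 2 (fun i => u t i * Xex i (gamma t) j)). split; [apply Hdt, Hj|].
      apply Ham_derivable_costate, Hj.
  - exists 0. split; [lra|]. apply ae_on_everywhere. intros t Ht.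
    assert (Hsw : forall i, (i < 2)%nat -> pairing 3 covector_dz (Xex i (gamma t)) = 0)
      by (intros i; apply (switching_dz_on_line gamma t i (proj1 (Hline t Ht)))).
    unfold Ham.
    rewrite (rsum_ext 2 _ (fun _ => 0)) by (intros i Hi; rewrite Hsw by exact Hi; ring).
    rewrite rsum_zero. split; [reflexivity|].
    rewrite (rsum_ext 2 _ (fun _ => 0)) by (intros i Hi; rewrite Hsw by exact Hi; apply Rabs_R0).
    apply rsum_zero.
Qed.

Theorem mainTheorem15 :
  (forall (T : R) (lam gamma : R -> pt) (u : R -> nat -> R) (a b : R),
     extremal_pair 3 2 Xex T lam gamma u ->
     0 <= a -> a < b -> b <= T ->
     abnormal_arc 3 2 Xex lam gamma a b ->
     (exists t1 t2, a < t1 < b /\ a < t2 < b /\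
        exists j, (j < 3)%nat /\ gamma t1 j <> gamma t2 j) ->
     exists z0 : R, forall t, a < t < b ->
       gamma t 1%nat = 0 /\ gamma t 2%nat = z0)
  /\
  (forall (T : R) (gamma : R -> pt) (u : R -> nat -> R) (z0 : R),
     admissible 3 2 Xex T gamma u ->
     (forall t, 0 <= t <= T -> gamma t 1%nat = 0 /\ gamma t 2%nat = z0) ->
     exists lam : R -> pt,
       extremal_pair 3 2 Xex T lam gamma u /\
       abnormal_arc 3 2 Xex lam gamma 0 T).
Proof.
  split.
  - intros T lam gamma u a b Hext Ha Hab Hb Habn [t1 [t2 [Ht1 [Ht2 [j [Hj Hne]]]]]].
    set (m := (a + b) / 2). assert (Hm : a < m < b) by (unfold m; lra).
    destruct (Req_dec (gamma m 1%nat) 0) as [Hy|Hy].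
    + exact (abnormal_arc_on_line T a b lam gamma u Hext Ha Hb Habn m Hm Hy).
    + exfalso. apply Hne.
      exact (abnormal_arc_off_line_const T a b lam gamma u Hext Ha Hb Habn m Hm Hy j Hj t1 t2 Ht1 Ht2).
  - intros T gamma u z0 Hadm Hline. exists (fun _ => covector_dz).
    split; [exact (covector_dz_extremal T gamma u z0 Hadm Hline)|exact (covector_dz_abnormal T gamma z0 Hline)].
Qed.
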